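(* For every positive integer $p$, there is a deterministic $p$-pass streaming algorithm for \textsc{Find-Duplicate} that uses $\widetilde{O}(n^{1/p})$ memory (where $\widetilde{O}$ hides factors polylogarithmic in $n$).
   Context: \textsc{Find-Duplicate}: the input is a stream of $3n/2$ integers, each in $\{1,\dots,n\}$; the goal is to output an integer that appears at least twice in the stream. A $p$-pass streaming algorithm is allowed to read the entire input stream, in order, $p$ times, maintaining only its memory state between and during passes. *)

From Stdlib Require Import Reals.
From mathcomp Require Import all_boot.
Set Implicit Arguments. Unset Strict Implicit. Unset Printing Implicit Defensive.

(* Nothing but the memory
   state is kept between and during passes. *)
Record streamAlg := StreamAlg {
  sa_state : finType;
  sa_init  : sa_state;
  sa_step  : sa_state -> nat -> sa_state;
  sa_out   : sa_state -> nat }.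

Definition run_passes (A : streamAlg) (p : nat) (s : seq nat) : sa_state A :=
  iter p (fun q => foldl (@sa_step A) q s) (@sa_init A).

Definition fd_input (n : nat) (s : seq nat) : bool :=
  (size s == (3 * n)./2) && all (fun x => (0 < x <= n)) s.

Definition solves_find_dup (A : streamAlg) (p n : nat) : Prop :=
  forall s, fd_input n s -> 1 < count_mem (@sa_out A (run_passes A p s)) s.

Definition uses_memory (A : streamAlg) (bits : nat) : Prop :=
  #|sa_state A| <= 2 ^ bits.

From Stdlib Require Import Reals Lra.
From mathcomp Require Import all_boot zify.
Set Implicit Arguments. Unset Strict Implicit. Unset Printing Implicit Defensive.

(* A [b]-ary search over the values, with [b] the least integer such that
   [n <= b ^ p], so that [b <= 2 n^(1/p)].  Call a block of consecutive values
   overfull when the stream has more items in it than the block has values in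
   {1,...,n}; the whole range is overfull since the stream is longer than [n].
   Pass [i] splits the current overfull block, of size [b ^ (p - i)], into [b]
   sub-blocks, tallies the stream with one counter per sub-block, and moves to
   a sub-block that is again overfull, which exists by pigeonhole.  After [p]
   passes the block is a single value occurring at least twice.  The memory is
   [b] counters of [O(log n)] bits plus [O(p log n)] bits of bookkeeping. *)

(* Values are 1-based: block [Q] of size [m] is {Q m + 1, ..., Q m + m}. *)
Definition in_block (m Q x : nat) : bool := x.-1 %/ m == Q.

Definition block_capacity (n m Q : nat) : nat := count (in_block m Q) (iota 1 n).

Definition overfull (n m Q : nat) (s : seq nat) : bool :=
  block_capacity n m Q < count (in_block m Q) s.

Lemma in_blockM m b Q x : 0 < b ->
  in_block (m * b) Q x = \sum_(d < b) in_block m (Q * b + d) x :> nat.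
Proof.
move=> b_gt0; rewrite /in_block divnMA; set y := x.-1 %/ m.
case: eqP => [<-|neq_yQ].
  rewrite (bigD1 (Ordinal (ltn_pmod y b_gt0))) //= {1}(divn_eq y b) eqxx.
  rewrite big1 // => d /negbTE neq_d; apply/eqP; rewrite eqb0; apply/eqP => Ey.
  by move: neq_d; rewrite -val_eqE /= Ey modnMDl modn_small ?eqxx.
rewrite big1 // => d _; apply/eqP; rewrite eqb0; apply/eqP => Ey; apply: neq_yQ.
by rewrite Ey divnMDl // divn_small // addn0.
Qed.

Lemma count_in_blockM m b Q s : 0 < b ->
  count (in_block (m * b) Q) s = \sum_(d < b) count (in_block m (Q * b + d)) s.
Proof.
move=> b_gt0; elim: s => [|x s IHs] /=; first by rewrite big1.
by rewrite IHs big_split /= in_blockM.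
Qed.

Lemma ltn_sum_exists (I : finType) (f g : I -> nat) :
  \sum_i f i < \sum_i g i -> exists i, f i < g i.
Proof.
move=> lt_fg; apply/existsP; apply: contraLR lt_fg => /existsPn le_gf.
by rewrite -leqNgt leq_sum // => i _; rewrite leqNgt le_gf.
Qed.

Definition next_block (n m b Q : nat) (cnt : 'I_b -> nat) : nat :=
  Q * b + if [pick d : 'I_b | block_capacity n m (Q * b + d) < cnt d] is Some d
          then val d else 0.

Lemma next_block_ext n m b Q (cnt1 cnt2 : 'I_b -> nat) : cnt1 =1 cnt2 ->
  next_block n m Q cnt1 = next_block n m Q cnt2.
Proof. by move=> E; rewrite /next_block (eq_pick (fun d => congr1 _ (E d))). Qed.

Lemma next_block_lt n m b Q c (cnt : 'I_b -> nat) : 0 < b -> Q < c ->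
  next_block n m Q cnt < c * b.
Proof.
move=> b_gt0 lt_Qc; rewrite /next_block; set d := (X in Q * b + X).
have lt_db : d < b by rewrite /d; case: pickP => [d' _|_]; [exact: ltn_ord | exact: b_gt0].
nia.
Qed.

Lemma next_block_overfull n m b Q s : 0 < b -> overfull n (m * b) Q s ->
  overfull n m (next_block n m Q (fun d : 'I_b => count (in_block m (Q * b + d)) s)) s.
Proof.
move=> b_gt0; rewrite /overfull /block_capacity !count_in_blockM //.
move=> /ltn_sum_exists[d0 overfull_d0]; rewrite /next_block.
by case: pickP => [d //|/(_ d0)]; rewrite overfull_d0.
Qed.

Lemma overfull_range n m s : n <= m -> n < size s ->
  all (fun x => 0 < x <= n) s -> overfull n m 0 s.
Proof.
move=> le_nm lt_ns /allP s_range; rewrite /overfull /block_capacity.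
have in_block0 x : 0 < x <= n -> in_block m 0 x.
  by move=> /andP[x_gt0 le_xn]; rewrite /in_block divn_small //; lia.
rewrite (eq_in_count (a2 := predT)) => [|x]; last first.
  by rewrite mem_iota => x_range; rewrite in_block0 //; lia.
rewrite (@eq_in_count _ _ predT s) => [|x /s_range/in_block0 //].
by rewrite !count_predT size_iota.
Qed.

Lemma overfull_unit_block n Q s : all (fun x => 0 < x <= n) s ->
  overfull n 1 Q s -> 1 < count_mem Q.+1 s.
Proof.
move=> /allP s_range; rewrite /overfull /block_capacity.
have in_block1 x : 0 < x -> in_block 1 Q x = (x == Q.+1).
  by rewrite /in_block divn1; case: x.
rewrite (eq_in_count (a2 := pred1 Q.+1)) => [|x]; last first.
  by rewrite mem_iota => /andP[/in_block1].
rewrite (@eq_in_count _ _ (pred1 Q.+1) s) => [|x /s_range/andP[/in_block1 //]].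
rewrite count_uniq_mem ?iota_uniq //; case: (boolP (Q.+1 \in iota 1 n)) => //.
rewrite mem_iota /= => Q_out; rewrite -has_count has_pred1 => /s_range.
by move: Q_out; lia.
Qed.

Section BlockSearch.
Variables n p b L : nat.

(* Pass number, current block, items read in the current pass (the model has
   no end-of-pass signal), and one counter per sub-block of the current block. *)
Definition fd_state : finType :=
  ('I_p.+1 * 'I_(b ^ p).+1 * 'I_L.+1 * {ffun 'I_b -> 'I_L.+1})%type.

Definition fd_cfg (i P j : nat) (c : 'I_b -> nat) : fd_state :=
  (inord i, inord P, inord j, [ffun d => inord (c d)]).

Definition fd_step (q : fd_state) (x : nat) : fd_state :=
  let: (i, P, j, c) := q in
  let m := b ^ (p - i.+1) in
  let c' d := c d + in_block m (P * b + d) x in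
  if j.+1 == L then fd_cfg i.+1 (next_block n m P c') 0 (fun _ => 0)
  else fd_cfg i P j.+1 c'.

Definition fd_out (q : fd_state) : nat := let: (_, P, _, _) := q in P.+1.

Definition fd_alg : streamAlg := StreamAlg (fd_cfg 0 0 0 (fun _ => 0)) fd_step fd_out.

Lemma fd_alg_out i P j (c : 'I_b -> nat) :
  P <= b ^ p -> @sa_out fd_alg (fd_cfg i P j c) = P.+1.
Proof. by move=> le_Pb; congr S; exact: inordK. Qed.

Lemma fd_cfg_ext i P j (c1 c2 : 'I_b -> nat) : c1 =1 c2 ->
  fd_cfg i P j c1 = fd_cfg i P j c2.
Proof. by move=> E; congr (_, _); apply/ffunP => d; rewrite !ffunE E. Qed.

Lemma fd_step_cfg i P j (c : 'I_b -> nat) x :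
  i <= p -> P <= b ^ p -> j <= L -> (forall d, c d <= L) ->
  let c' d := c d + in_block (b ^ (p - i.+1)) (P * b + d) x in
  fd_step (fd_cfg i P j c) x =
  if j.+1 == L then fd_cfg i.+1 (next_block n (b ^ (p - i.+1)) P c') 0 (fun _ => 0)
  else fd_cfg i P j.+1 c'.
Proof.
move=> le_ip le_Pb le_jL le_cL c' /=; rewrite !inordK //.
have ffun_c d : [ffun d => inord (c d) : 'I_L.+1] d = c d :> nat.
  by rewrite ffunE inordK ?ltnS.
case: ifP => _; [congr fd_cfg; apply: next_block_ext | apply: fd_cfg_ext].
all: by move=> d; rewrite /c' ffun_c.
Qed.

Lemma fd_pass_prefix i P s : i <= p -> P <= b ^ p -> size s < L ->
  foldl fd_step (fd_cfg i P 0 (fun _ => 0)) s =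
  fd_cfg i P (size s) (fun d => count (in_block (b ^ (p - i.+1)) (P * b + d)) s).
Proof.
move=> le_ip le_Pb; elim/last_ind: s => [//|s x IHs].
rewrite size_rcons foldl_rcons => lt_sL; have le_sL := ltnW (ltnW lt_sL).
have le_cnt d : count (in_block (b ^ (p - i.+1)) (P * b + d)) s <= L.
  exact: leq_trans (count_size _ _) le_sL.
rewrite (IHs (ltnW lt_sL)) (fd_step_cfg x le_ip le_Pb le_sL le_cnt) (ltn_eqF lt_sL).
by apply: fd_cfg_ext => d; rewrite -cats1 count_cat /= addn0.
Qed.

Lemma fd_pass i P s : 0 < L -> size s = L -> i <= p -> P <= b ^ p ->
  let m := b ^ (p - i.+1) in
  foldl fd_step (fd_cfg i P 0 (fun _ => 0)) s =
  fd_cfg i.+1 (next_block n m P (fun d : 'I_b => count (in_block m (P * b + d)) s))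
         0 (fun _ => 0).
Proof.
move=> L_gt0 size_s le_ip le_Pb m.
case/lastP: s size_s => [L0|s x]; first by rewrite -L0 in L_gt0.
rewrite size_rcons => size_s; have lt_sL : size s < L by rewrite -size_s.
have le_cnt d : count (in_block m (P * b + d)) s <= L.
  exact: leq_trans (count_size _ _) (ltnW lt_sL).
rewrite foldl_rcons (fd_pass_prefix le_ip le_Pb lt_sL).
rewrite (fd_step_cfg x le_ip le_Pb (ltnW lt_sL) le_cnt) size_s eqxx.
congr fd_cfg; apply: next_block_ext => d.
by rewrite -cats1 count_cat /= addn0.
Qed.

Lemma fd_run_passes s i :
  0 < b -> 0 < L -> size s = L -> overfull n (b ^ p) 0 s -> i <= p ->
  exists2 P, P < b ^ i /\ overfull n (b ^ (p - i)) P s &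
             run_passes fd_alg i s = fd_cfg i P 0 (fun _ => 0).
Proof.
move=> b_gt0 L_gt0 size_s overfull_s; elim: i => [|i IHi] lt_ip.
  by exists 0; rewrite ?subn0.
have [P [lt_Pb overfull_P] run_i] := IHi (ltnW lt_ip).
have le_Pb : P <= b ^ p by rewrite ltnW // (leq_trans lt_Pb) // leq_pexp2l // ltnW.
rewrite /run_passes iterS -/(run_passes _ i s) run_i.
rewrite (fd_pass L_gt0 size_s (ltnW lt_ip) le_Pb).
eexists; last reflexivity.
split; first by rewrite expnSr next_block_lt.
by apply: next_block_overfull; rewrite // -expnSr subnSK.
Qed.

Lemma fd_alg_finds_duplicate s : 0 < b -> n < L -> n <= b ^ p -> size s = L ->
  all (fun x => 0 < x <= n) s -> 1 < count_mem (sa_out (run_passes fd_alg p s)) s.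
Proof.
move=> b_gt0 lt_nL le_nbp size_s s_range.
have overfull_s : overfull n (b ^ p) 0 s by rewrite overfull_range ?size_s.
have L_gt0 : 0 < L by exact: leq_ltn_trans (leq0n n) lt_nL.
have [P [lt_Pb overfull_P] ->] :=
  fd_run_passes b_gt0 L_gt0 size_s overfull_s (leqnn p).
rewrite (fd_alg_out _ _ _ (ltnW lt_Pb)); apply: overfull_unit_block s_range _.
by rewrite subnn expn0 in overfull_P.
Qed.

End BlockSearch.

Lemma card_fd_state p b L K : 0 < b -> 0 < K -> b <= 2 ^ K -> L < 2 ^ K ->
  #|fd_state p b L| <= 2 ^ ((2 * p + 3) * K * b).
Proof.
move=> b_gt0 K_gt0 le_b2K lt_L2K.
rewrite !card_prod card_ffun !card_ord.
have le_bp : (b ^ p).+1 <= 2 ^ (K * p).+1.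
  have le_bKp : b ^ p <= 2 ^ (K * p).
    by rewrite expnM; case: p => [|p] //; rewrite leq_exp2r.
  by rewrite expnS; move: le_bKp (expn_gt0 2 (K * p)) => /=; lia.
have le_p : p.+1 <= 2 ^ p by exact: ltn_expl.
have le_Lb : L.+1 ^ b <= 2 ^ (K * b) by rewrite expnM leq_exp2r.
apply: (@leq_trans (2 ^ p * 2 ^ (K * p).+1 * 2 ^ K * 2 ^ (K * b))).
  by rewrite !leq_mul.
rewrite -!expnD leq_pexp2l //; nia.
Qed.

Lemma exists_ceil_root n p : 0 < p -> 1 < n ->
  exists b, [/\ 1 < b, b <= n, n <= b ^ p & b.-1 ^ p < n].
Proof.
move=> p_gt0 n_gt1.
have n_le_np : n <= n ^ p by rewrite -{1}(expn1 n) leq_pexp2l // ltnW.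
have [b le_nbp minb] := ex_minnP (ex_intro (fun b => n <= b ^ p) n n_le_np).
have b_gt1 : 1 < b.
  by move: le_nbp; case: b {minb} => [|[|b]] //; rewrite ?exp0n ?exp1n //; lia.
have lt_b1 : b.-1 ^ p < n.
  by rewrite ltnNge; apply/negP => /minb; rewrite leqNgt ltn_predL ltnW.
by exists b; split=> //; apply: minb.
Qed.

Open Scope R_scope.

Lemma INR_expn m k : INR (m ^ k) = INR m ^ k.
Proof. by elim: k => [|k IHk]; rewrite ?expn0 // expnS mult_INR IHk. Qed.

Lemma INR_mul_ln_le a K m :
  (0 < a)%N -> (a ^ K <= m)%N -> INR K * ln (INR a) <= ln (INR m).
Proof.
move=> a_gt0; have a_pos : 0 < INR a by apply/lt_0_INR/ssrnat.ltP.
rewrite -ln_pow // -INR_expn leq_eqVlt => /orP[/eqP-> | lt_aKm]; first exact: Rle_refl.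
apply/Rlt_le/ln_increasing; first by rewrite INR_expn; apply: pow_lt.
exact/lt_INR/ssrnat.ltP.
Qed.

Lemma INR_lt_root m n p :
  (0 < p)%N -> (m ^ p < n)%N -> INR m < Rpower (INR n) (/ INR p).
Proof.
move=> p_gt0 lt_mpn; have n_pos : 0 < INR n by apply/lt_0_INR/ssrnat.ltP; lia.
have p_neq0 : INR p <> 0 by apply: not_0_INR; lia.
apply: Rnot_le_lt => le_rm.
have : INR n <= INR (m ^ p).
  rewrite INR_expn -(Rpower_1 (INR n)) // -(Rinv_l (INR p)) // -Rpower_mult Rpower_pow.
    by apply: pow_incr; split => //; apply: Rlt_le; apply: exp_pos.
  exact: exp_pos.
by move/lt_INR: (ssrnat.ltP lt_mpn); lra.
Qed.

Lemma memory_bits_bound c p n K b : (0 < p)%N -> (1 < n)%N -> (2 ^ K <= n ^ 3)%N ->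
  (1 < b)%N -> (b.-1 ^ p < n)%N ->
  INR (c * K * b) <= INR c * 6 / ln 2 * Rpower (INR n) (/ INR p) * ln (INR n).
Proof.
move=> p_gt0 n_gt1 le_2Kn3 b_gt1 lt_b1n.
have ln2_pos : 0 < ln 2 by rewrite -ln_1; apply: ln_increasing; lra.
have le_K : INR K <= 3 * ln (INR n) / ln 2.
  have le_Kln2 : INR K * ln (INR 2) <= INR 3 * ln (INR n).
    rewrite -[INR 3 * _]ln_pow -?INR_expn; first exact: INR_mul_ln_le.
    by apply/lt_0_INR/ssrnat.ltP; lia.
  have [INR2 INR3] : INR 2 = 2 /\ INR 3 = 3 by split; simpl; lra.
  apply: (Rmult_le_reg_r (ln 2)) => //; rewrite /Rdiv Rmult_assoc Rinv_l; last lra.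
  by rewrite INR2 INR3 in le_Kln2; lra.
have le_b : INR b <= 2 * Rpower (INR n) (/ INR p).
  have lt_b1r := INR_lt_root p_gt0 lt_b1n.
  have le_1b : 1 <= INR b.-1 by apply: (le_INR 1); apply/ssrnat.leP; lia.
  by rewrite -(prednK (ltnW b_gt1)) S_INR; lra.
rewrite !mult_INR.
set r := Rpower (INR n) (/ INR p) in le_b *.
apply: (Rle_trans _ (INR c * (3 * ln (INR n) / ln 2) * (2 * r))).
  apply: Rmult_le_compat => //; first by rewrite -mult_INR; apply: pos_INR.
    exact: pos_INR.
  by apply: Rmult_le_compat_l => //; apply: pos_INR.
by apply: Req_le; field; lra.
Qed.

Close Scope R_scope.

Theorem mainTheorem2 :
  forall p : nat, 0 < p ->
  exists (C : R) (k : nat),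
    forall n : nat, 2 <= n ->
      exists (A : streamAlg) (bits : nat),
        solves_find_dup A p n /\ uses_memory A bits /\
        Rle (INR bits) (Rmult (Rmult C (Rpower (INR n) (Rinv (INR p)))) (pow (ln (INR n)) k)).
Proof.
move=> p p_gt0; exists (Rdiv (Rmult (INR (2 * p + 3)) 6) (ln 2)), 1 => n n_gt1.
have [b [b_gt1 le_bn le_nbp lt_b1n]] := exists_ceil_root p_gt0 n_gt1.
set L := (3 * n)./2; set K := (trunc_log 2 L).+1.
have lt_nL : n < L by rewrite /L; lia.
have lt_L2K : L < 2 ^ K := trunc_log_ltn L (isT : 1 < 2).
have le_2Kn3 : 2 ^ K <= n ^ 3.
  have := trunc_logP (isT : 1 < 2) (leq_ltn_trans (leq0n n) lt_nL).
  by rewrite /K expnS /L; nia.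
exists (fd_alg n p b L), ((2 * p + 3) * K * b); split; [|split].
- by move=> s /andP[/eqP size_s s_range]; apply: fd_alg_finds_duplicate; lia.
- by apply: card_fd_state; lia.
by rewrite pow_1; apply: memory_bits_bound.
Qed.
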